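(* Realize $\mathrm{SO}(3)\times\mathbb{R}$ as the group of $4\times4$ matrices $(C,v)=\begin{pmatrix}C&0\\0&e^v\end{pmatrix}$, $C\in\mathrm{SO}(3)$, $v\in\mathbb{R}$, and let $E_1=e_{32}-e_{23}$, $E_2=e_{13}-e_{31}$, $E_3=e_{21}-e_{12}$, $E_4=e_{44}$ ($e_{jk}$ the $4\times4$ matrix units), $e_1=E_1$, $e_2=E_4-E_3$, $e_3=E_2$, $e_4=E_3$. For $\alpha_1^2+\alpha_2^2+\alpha_3^2=1$, $\beta\in\mathbb{R}$ let $$\gamma_1(t)=\gamma_1(\alpha_1,\alpha_2,\alpha_3,\beta;t)=\exp\bigl(t(\alpha_1e_1+\alpha_2e_2+\alpha_3e_3+\beta e_4)\bigr)\exp(-t\beta e_4)$$ (the arclength geodesics through $\mathrm{Id}$ of the left-invariant sub-Riemannian metric $\rho_1$ defined by $\mathrm{span}(e_1,e_2,e_3)$ with orthonormal basis $e_1,e_2,e_3$). Put $w_1=\sqrt{1-\alpha_2^2+(\beta-\alpha_2)^2}$, $\mu_1=\frac{\sin w_1t}{w_1}$, $\nu_1=\frac{1-\cos w_1t}{w_1^2}$, and $\delta=\beta-\alpha_2$. If $\alpha_2\neq\pm1$, then $\gamma_1(t)=(C,v)(t)$ with $v(t)=\alpha_2t$ and the columns of $C(t)\in\mathrm{SO}(3)$ given by $$C_1=\begin{pmatrix}(1-\nu_1(\alpha_3^2+\delta^2))\cos\beta t-(\alpha_1\alpha_3\nu_1-\delta\mu_1)\sin\beta t\\ (\alpha_1\alpha_3\nu_1+\delta\mu_1)\cos\beta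 t-(1-\nu_1(\alpha_1^2+\delta^2))\sin\beta t\\ (\alpha_1\delta\nu_1-\alpha_3\mu_1)\cos\beta t-(\alpha_3\delta\nu_1+\alpha_1\mu_1)\sin\beta t\end{pmatrix},$$ $$C_2=\begin{pmatrix}(1-\nu_1(\alpha_3^2+\delta^2))\sin\beta t+(\alpha_1\alpha_3\nu_1-\delta\mu_1)\cos\beta t\\ (\alpha_1\alpha_3\nu_1+\delta\mu_1)\sin\beta t+(1-\nu_1(\alpha_1^2+\delta^2))\cos\beta t\\ (\alpha_1\delta\nu_1-\alpha_3\mu_1)\sin\beta t+(\alpha_3\delta\nu_1+\alpha_1\mu_1)\cos\beta t\end{pmatrix},\quad C_3=\begin{pmatrix}\alpha_1\delta\nu_1+\alpha_3\mu_1\\ \alpha_3\delta\nu_1-\alpha_1\mu_1\\ 1-\nu_1(\alpha_1^2+\alpha_3^2)\end{pmatrix}.$$ If $\alpha_2=\pm1$, then $\gamma_1(t)=(C,v)(t)$ with $v(t)=\alpha_2t$ and $C(t)=\begin{pmatrix}\cos\alpha_2t&\sin\alpha_2t&0\\-\sin\alpha_2t&\cos\alpha_2t&0\\0&0&1\end{pmatrix}$.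
   Context: The matrices $E_1,\dots,E_4$ satisfy $[E_1,E_2]=E_3$, $[E_2,E_3]=E_1$, $[E_3,E_1]=E_2$, $[E_i,E_4]=0$. *)

From HB Require Import structures.
From mathcomp Require Import all_boot all_order all_algebra.
From mathcomp Require Import all_classical all_reals all_analysis.
Set Implicit Arguments. Unset Strict Implicit. Unset Printing Implicit Defensive.
Import Order.TTheory GRing.Theory Num.Theory.
Local Open Scope ring_scope.

Section Defs.
Variable R : realType.

Definition expm (n : nat) (A : 'M[R]_n.+1) : 'M[R]_n.+1 :=
  \matrix_(i, j) limn (fun N : nat => \sum_(k < N) (A ^+ k) i j / (k`!)%:R).

(* 4x4 matrix units e_{jk}, indices 1-based as in the paper. *)
Definition munit (j k : nat) : 'M[R]_4 :=
  \matrix_(a, b) ((a.+1 == j) && (b.+1 == k))%:R.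

Definition E1 : 'M[R]_4 := munit 3 2 - munit 2 3.
Definition E2 : 'M[R]_4 := munit 1 3 - munit 3 1.
Definition E3 : 'M[R]_4 := munit 2 1 - munit 1 2.
Definition E4 : 'M[R]_4 := munit 4 4.

Definition e1 : 'M[R]_4 := E1.
Definition e2 : 'M[R]_4 := E4 - E3.
Definition e3 : 'M[R]_4 := E2.
Definition e4 : 'M[R]_4 := E3.

Definition gamma1 (a1 a2 a3 b t : R) : 'M[R]_4 :=
  expm (t *: (a1 *: e1 + a2 *: e2 + a3 *: e3 + b *: e4)) *m expm ((- (t * b)) *: e4).

Definition vec3 (x y z : R) : 'cV[R]_3 := \col_i [:: x; y; z]`_i.

Definition mx_of_cols (c1 c2 c3 : 'cV[R]_3) : 'M[R]_3 :=
  \matrix_(i, j) (nth c1 [:: c1; c2; c3] j) i ord0.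

Definition CV (C : 'M[R]_3) (v : R) : 'M[R]_4 :=
  block_mx C 0 0 (expR v)%:M.

End Defs.

From HB Require Import structures.
From mathcomp Require Import all_boot all_order all_algebra.
From mathcomp Require Import all_classical all_reals all_analysis.
From mathcomp Require Import ring lra.
Set Implicit Arguments.
Unset Strict Implicit.
Unset Printing Implicit Defensive.

Import Order.TTheory GRing.Theory Num.Theory numFieldNormedType.Exports.
Local Open Scope ring_scope.
Local Open Scope classical_set_scope.

(** The generator of the first factor of [gamma1] splits as [t *: J + (t * a2) *: E4]
    with [J = a1 *: E1 + a3 *: E2 + (b - a2) *: E3]; [J] annihilates the idempotent [E4]
    on both sides and satisfies [J ^+ 3 = - w ^+ 2 *: J], so the exponential series
    collapses to Rodrigues' formula
    [1 + (sin (w t) / w) J + ((1 - cos (w t)) / w ^ 2) J ^ 2 + (e ^ (a2 t) - 1) E4].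
    Every matrix involved is block diagonal [diag(A, a)], so multiplying by the second
    factor, a rotation about the third axis, reduces to a 3 x 3 identity.  When
    [a2 = 1] or [a2 = -1], [J] is a multiple of [E3] and the two rotations about the
    third axis compose by adding their angles. *)

Lemma exprD_orthogonal (T : pzRingType) (a b : T) : a * b = 0 -> b * a = 0 ->
  forall k, (a + b) ^+ k.+1 = a ^+ k.+1 + b ^+ k.+1.
Proof.
move=> ab ba; elim=> [|k IHk]; first by rewrite !expr1.
have akb : a ^+ k.+1 * b = 0 by rewrite exprSr -mulrA ab mulr0.
have bka : b ^+ k.+1 * a = 0 by rewrite exprSr -mulrA ba mulr0.
by rewrite exprSr IHk mulrDl !mulrDr akb bka addr0 add0r -!exprSr.
Qed.

Lemma expr_idempotent (T : pzSemiRingType) (e : T) : e * e = e ->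
  forall k, e ^+ k.+1 = e.
Proof. by move=> ee; elim=> [|k IHk]; rewrite ?expr1 // exprSr IHk. Qed.

Section MatrixExponential.
Variables (R : realType) (n : nat).

Definition expm_sum (A : 'M[R]_n.+1) (N : nat) : 'M[R]_n.+1 :=
  \sum_(k < N) (k`!%:R)^-1 *: A ^+ k.

Lemma expm_lim (A L : 'M[R]_n.+1) :
  (forall i j, (fun N => expm_sum A N.+1 i j) @ \oo --> L i j) -> expm A = L.
Proof.
move=> cvgL; apply/matrixP => i j; rewrite mxE.
apply: cvg_lim; first exact: Rhausdorff.
rewrite -cvg_shiftS; apply: cvg_trans (cvgL i j).
suff -> : (fun N => expm_sum A N.+1 i j) =
         [sequence \sum_(k < N.+1) (A ^+ k) i j / k`!%:R]_N by [].
by apply/funext => N; rewrite /expm_sum summxE; apply: eq_bigr => k _; rewrite mxE mulrC.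
Qed.

Section Rodrigues.
Variables (J P : 'M[R]_n.+1) (w : R).
Hypotheses (w_neq0 : w != 0) (JP : J * P = 0) (PJ : P * J = 0) (PP : P * P = P).
Hypothesis J3 : J ^+ 3 = - w ^+ 2 *: J.

Lemma exprJ_odd m : J ^+ m.*2.+1 = (- w ^+ 2) ^+ m *: J.
Proof.
elim: m => [|m IHm]; first by rewrite expr1 expr0 scale1r.
by rewrite doubleS -addn2 exprD IHm -scalerAl -exprS J3 scalerA -exprSr.
Qed.

Lemma exprJ_even m : J ^+ m.*2.+2 = (- w ^+ 2) ^+ m *: J ^+ 2.
Proof. by rewrite exprSr exprJ_odd -scalerAl -expr2. Qed.

Lemma expm_term_rodrigues s k :
  (k.+1`!%:R)^-1 *: (s *: J) ^+ k.+1 =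
  (sin_coeff (w * s) k.+1 / w) *: J - (cos_coeff (w * s) k.+1 / w ^+ 2) *: J ^+ 2.
Proof.
have fact_neq0 m : m`!%:R != 0 :> R by rewrite pnatr_eq0 -lt0n fact_gt0.
rewrite exprZn -[k](odd_double_half k); case: (odd k); rewrite ?add1n ?add0n.
- rewrite -doubleS exprJ_even sin_coeff_even -cos_coeff'E /cos_coeff'.
  rewrite !scalerA mul0r scale0r sub0r -[X in _ = X]scaleNr; congr (_ *: _).
  rewrite -exprnP exprNn -exprM mul2n doubleS !exprS exprMn.
  by field; rewrite fact_neq0 w_neq0.
- rewrite exprJ_odd cos_coeff_odd -sin_coeff'E /sin_coeff'.
  rewrite !scalerA mul0r scale0r subr0; congr (_ *: _).
  rewrite -exprnP exprNn -exprM mul2n !exprS exprMn.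
  by field; rewrite fact_neq0 w_neq0.
Qed.

Lemma expm_sum_rodrigues s c N :
  expm_sum (s *: J + c *: P) N.+1 =
  1 + (series (sin_coeff (w * s)) N.+1 / w) *: J
    + ((1 - series (cos_coeff (w * s)) N.+1) / w ^+ 2) *: J ^+ 2
    + (series (exp_coeff c) N.+1 - 1) *: P.
Proof.
elim: N => [|N IHN].
  have sin0 : sin_coeff (w * s) 0 = 0 by exact: (sin_coeff_even 0).
  have cos0 : cos_coeff (w * s) 0 = 1 by rewrite /cos_coeff /= expr0 !mul1r invr1.
  have exp0 : exp_coeff c 0 = 1 by rewrite /exp_coeff /= expr0 mul1r invr1.
  rewrite /expm_sum big_ord1 fact0 invr1 expr0 scale1r /series /= !big_nat1.
  by rewrite sin0 cos0 exp0 mul0r subrr !mul0r !scale0r !addr0.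
have JP_scaled : (s *: J) * (c *: P) = 0 by rewrite -scalerAl -scalerAr JP !scaler0.
have PJ_scaled : (c *: P) * (s *: J) = 0 by rewrite -scalerAl -scalerAr PJ !scaler0.
rewrite /expm_sum big_ord_recr -/(expm_sum _ N.+1) IHN /=.
rewrite exprD_orthogonal // [(c *: P) ^+ _]exprZn (expr_idempotent PP).
rewrite scalerDr expm_term_rodrigues.
rewrite !seriesSr /exp_coeff /=.
by apply/matrixP => i j; rewrite !mxE; ring.
Qed.

Theorem expm_rodrigues s c :
  expm (s *: J + c *: P) =
  1 + (sin (w * s) / w) *: J + ((1 - cos (w * s)) / w ^+ 2) *: J ^+ 2
    + (expR c - 1) *: P.
Proof.
have cvg_seriesS (u : R^nat) l :
    series u @ \oo --> l -> (fun N => series u N.+1) @ \oo --> l.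
  by rewrite -(cvg_shiftS (series u)).
have sin_cvg : series (sin_coeff (w * s)) @ \oo --> sin (w * s).
  by rewrite unlock; exact: is_cvg_series_sin_coeff.
have cos_cvg : series (cos_coeff (w * s)) @ \oo --> cos (w * s).
  by rewrite unlock; exact: is_cvg_series_cos_coeff.
have exp_cvg : series (exp_coeff c) @ \oo --> expR c.
  exact: is_cvg_series_exp_coeff.
apply: expm_lim => i j.
have -> : (fun N => expm_sum (s *: J + c *: P) N.+1 i j) =
    fun N => 1%:M i j + series (sin_coeff (w * s)) N.+1 / w * J i j
      + (1 - series (cos_coeff (w * s)) N.+1) / w ^+ 2 * (J ^+ 2) i j
      + (series (exp_coeff c) N.+1 - 1) * P i j.
  by apply/funext => N; rewrite expm_sum_rodrigues !mxE.
rewrite !mxE.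
apply: cvgD; last first.
  by apply: cvgMr_tmp; apply: cvgB; [exact: cvg_seriesS exp_cvg | exact: cvg_cst].
apply: cvgD; last first.
  apply: cvgMr_tmp; apply: cvgMr_tmp.
  by apply: cvgB; [exact: cvg_cst | exact: cvg_seriesS cos_cvg].
apply: cvgD; first exact: cvg_cst.
by apply: cvgMr_tmp; apply: cvgMr_tmp; exact: cvg_seriesS sin_cvg.
Qed.

End Rodrigues.
End MatrixExponential.

Section SO3xR.
Variable R : realType.
Local Notation E1 := (E1 R).
Local Notation E2 := (E2 R).
Local Notation E3 := (E3 R).
Local Notation E4 := (E4 R).

Definition so3 (p q r : R) : 'M[R]_4 := p *: E1 + q *: E2 + r *: E3.

Definition hat (p q r : R) : 'M[R]_3 :=
  mx_of_cols (vec3 0 r (- q)) (vec3 (- r) 0 p) (vec3 q (- p) 0).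

Definition rotz (phi : R) : 'M[R]_3 :=
  mx_of_cols (vec3 (cos phi) (sin phi) 0) (vec3 (- sin phi) (cos phi) 0) (vec3 0 0 1).

Definition bdiag (A : 'M[R]_3) (a : R) : 'M[R]_4 := block_mx A 0 0 a%:M.

Lemma CV_bdiag (C : 'M[R]_3) (v : R) : CV C v = bdiag C (expR v).
Proof. by []. Qed.

Lemma bdiag1 : 1 = bdiag 1 1.
Proof. exact: (scalar_mx_block 3 1 1). Qed.

(* The explicit sizes let the block lemmas see ['M_4] as ['M_(3 + 1)]. *)
Lemma bdiag0 : bdiag 0 0 = 0.
Proof. by rewrite /bdiag raddf0 (block_mx0 _ 3 1 3 1). Qed.

Lemma bdiagD A B a b : bdiag A a + bdiag B b = bdiag (A + B) (a + b).
Proof. by rewrite /bdiag (@add_block_mx _ 3 1 3 1) !addr0 raddfD. Qed.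

Lemma bdiagZ k A a : k *: bdiag A a = bdiag (k *: A) (k * a).
Proof. by rewrite /bdiag (@scale_block_mx _ 3 1 3 1) !scaler0 scale_scalar_mx. Qed.

Lemma bdiagM A B a b : bdiag A a * bdiag B b = bdiag (A *m B) (a * b).
Proof.
rewrite /bdiag -mulmxE (@mulmx_block _ 3 1 3 1 3 1).
by rewrite !mulmx0 !mul0mx !addr0 add0r -scalar_mxM.
Qed.

Lemma bdiagX A a k : bdiag A a ^+ k = bdiag (A ^+ k) (a ^+ k).
Proof.
elim: k => [|k IHk]; first by rewrite !expr0 bdiag1.
by rewrite !exprSr IHk bdiagM mulmxE.
Qed.

Lemma CV_mul (C D : 'M[R]_3) (v u : R) : CV C v *m CV D u = CV (C *m D) (v + u).
Proof. by rewrite mulmxE !CV_bdiag bdiagM expRD. Qed.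

Ltac mx3_ring :=
  rewrite ?expr2 -?mulmxE; apply/matrixP;
  case=> [[|[|[|?]]] ?] //; case=> [[|[|[|?]]] ?] //;
  rewrite !(mxE, big_ord_recl, big_ord0) /=; ring.

Ltac mx4_ring :=
  apply/matrixP; case=> [[|[|[|[|?]]]] ?] //; case=> [[|[|[|[|?]]]] ?] //;
  rewrite !mxE /=; ring.

Lemma bdiag_colsE (x11 x21 x31 x12 x22 x32 x13 x23 x33 a : R) :
  bdiag (mx_of_cols (vec3 x11 x21 x31) (vec3 x12 x22 x32) (vec3 x13 x23 x33)) a =
  \matrix_(i < 4, j < 4)
    nth 0 (nth [::] [:: [:: x11; x12; x13; 0]; [:: x21; x22; x23; 0];
                        [:: x31; x32; x33; 0]; [:: 0; 0; 0; a]] i) j.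
Proof.
apply/matrixP => i j; rewrite /bdiag !mxE.
case: (@splitP 3 1 i) => i' Hi; rewrite !mxE; case: (@splitP 3 1 j) => j' Hj;
  rewrite !mxE Hi Hj.
- by case: i' {Hi} => [[|[|[|?]]] ?] //; case: j' {Hj} => [[|[|[|?]]] ?] //; rewrite /= !mxE.
- by case: i' {Hi} => [[|[|[|?]]] ?] //; case: j' {Hj} => [[|?] ?].
- by case: i' {Hi} => [[|?] ?] //; case: j' {Hj} => [[|[|[|?]]] ?].
- by case: i' {Hi} => [[|?] ?] //; case: j' {Hj} => [[|?] ?].
Qed.

Lemma so3_bdiag p q r : so3 p q r = bdiag (hat p q r) 0.
Proof. by rewrite /hat bdiag_colsE; mx4_ring. Qed.

Lemma E4_bdiag : E4 = bdiag 0 1.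
Proof.
have zero_cols : 0 = mx_of_cols (vec3 0 0 0) (vec3 0 0 0) (vec3 0 0 0) :> 'M[R]_3.
  by mx3_ring.
by rewrite zero_cols bdiag_colsE; mx4_ring.
Qed.

Lemma so3_axis3 r : so3 0 0 r = r *: E3.
Proof. by rewrite /so3 !scale0r !add0r. Qed.

Lemma so3_mulE4 p q r : so3 p q r * E4 = 0.
Proof. by rewrite so3_bdiag E4_bdiag bdiagM mulmx0 mul0r bdiag0. Qed.

Lemma E4_mulso3 p q r : E4 * so3 p q r = 0.
Proof. by rewrite so3_bdiag E4_bdiag bdiagM mul0mx mulr0 bdiag0. Qed.

Lemma E4_idem : E4 * E4 = E4.
Proof. by rewrite E4_bdiag bdiagM mulmx0 mulr1. Qed.

Lemma hat_cube p q r : hat p q r ^+ 3 = - (p ^+ 2 + q ^+ 2 + r ^+ 2) *: hat p q r.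
Proof. by rewrite !exprS expr0 mulr1; mx3_ring. Qed.

Lemma so3_cube p q r : so3 p q r ^+ 3 = - (p ^+ 2 + q ^+ 2 + r ^+ 2) *: so3 p q r.
Proof. by rewrite so3_bdiag bdiagX hat_cube bdiagZ expr0n mulr0. Qed.

Lemma expm_so3 p q r w s c : w != 0 -> w ^+ 2 = p ^+ 2 + q ^+ 2 + r ^+ 2 ->
  expm (s *: so3 p q r + c *: E4) =
  CV (1 + (sin (w * s) / w) *: hat p q r + ((1 - cos (w * s)) / w ^+ 2) *: hat p q r ^+ 2) c.
Proof.
move=> w_neq0 w2.
have J3 : so3 p q r ^+ 3 = - w ^+ 2 *: so3 p q r by rewrite so3_cube w2.
rewrite (expm_rodrigues w_neq0 (so3_mulE4 p q r) (E4_mulso3 p q r) E4_idem J3).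
rewrite CV_bdiag so3_bdiag E4_bdiag bdiag1 bdiagX !bdiagZ !bdiagD.
by congr bdiag; [rewrite scaler0 addr0 | ring].
Qed.

Lemma expm_rotz phi c : expm (phi *: E3 + c *: E4) = CV (rotz phi) c.
Proof.
have unit_w : 1 ^+ 2 = 0 ^+ 2 + 0 ^+ 2 + 1 ^+ 2 :> R by rewrite expr0n expr1n !add0r.
rewrite -[E3]scale1r -so3_axis3 (expm_so3 _ _ (oner_neq0 R) unit_w).
by rewrite mul1r !divr1 expr1n divr1 /rotz; congr CV; mx3_ring.
Qed.

Lemma rotz_add theta phi : rotz theta *m rotz phi = rotz (theta + phi).
Proof. by rewrite /rotz cosD sinD; mx3_ring. Qed.

Lemma rodrigues_mul_rotzN p q r mu nu phi :
  (1 + mu *: hat p q r + nu *: hat p q r ^+ 2) *m rotz (- phi) =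
  mx_of_cols
    (vec3 ((1 - nu * (q ^+ 2 + r ^+ 2)) * cos phi - (p * q * nu - r * mu) * sin phi)
          ((p * q * nu + r * mu) * cos phi - (1 - nu * (p ^+ 2 + r ^+ 2)) * sin phi)
          ((p * r * nu - q * mu) * cos phi - (q * r * nu + p * mu) * sin phi))
    (vec3 ((1 - nu * (q ^+ 2 + r ^+ 2)) * sin phi + (p * q * nu - r * mu) * cos phi)
          ((p * q * nu + r * mu) * sin phi + (1 - nu * (p ^+ 2 + r ^+ 2)) * cos phi)
          ((p * r * nu - q * mu) * sin phi + (q * r * nu + p * mu) * cos phi))
    (vec3 (p * r * nu + q * mu) (q * r * nu - p * mu) (1 - nu * (p ^+ 2 + q ^+ 2))).
Proof. by rewrite /rotz /hat cosN sinN; mx3_ring. Qed.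

Lemma gamma1_generator a1 a2 a3 b t :
  t *: (a1 *: e1 R + a2 *: e2 R + a3 *: e3 R + b *: e4 R) =
  t *: so3 a1 a3 (b - a2) + (t * a2) *: E4.
Proof. by rewrite /e1 /e2 /e3 /e4 /so3; apply/matrixP => i j; rewrite !mxE; ring. Qed.

End SO3xR.

Theorem theorem8 (R : realType) (a1 a2 a3 b : R) :
  a1 ^+ 2 + a2 ^+ 2 + a3 ^+ 2 = 1 ->
  (a2 != 1 -> a2 != -1 ->
    let d := b - a2 in
    let w := Num.sqrt (1 - a2 ^+ 2 + d ^+ 2) in
    forall t : R,
    let mu := sin (w * t) / w in
    let nu := (1 - cos (w * t)) / w ^+ 2 in
    let cb := cos (b * t) in
    let sb := sin (b * t) in
    gamma1 a1 a2 a3 b t =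
    CV (mx_of_cols
          (vec3 ((1 - nu * (a3 ^+ 2 + d ^+ 2)) * cb - (a1 * a3 * nu - d * mu) * sb)
                ((a1 * a3 * nu + d * mu) * cb - (1 - nu * (a1 ^+ 2 + d ^+ 2)) * sb)
                ((a1 * d * nu - a3 * mu) * cb - (a3 * d * nu + a1 * mu) * sb))
          (vec3 ((1 - nu * (a3 ^+ 2 + d ^+ 2)) * sb + (a1 * a3 * nu - d * mu) * cb)
                ((a1 * a3 * nu + d * mu) * sb + (1 - nu * (a1 ^+ 2 + d ^+ 2)) * cb)
                ((a1 * d * nu - a3 * mu) * sb + (a3 * d * nu + a1 * mu) * cb))
          (vec3 (a1 * d * nu + a3 * mu)
                (a3 * d * nu - a1 * mu)
                (1 - nu * (a1 ^+ 2 + a3 ^+ 2))))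
       (a2 * t)) /\
  ((a2 = 1 \/ a2 = -1) ->
    forall t : R,
    gamma1 a1 a2 a3 b t =
    CV (mx_of_cols (vec3 (cos (a2 * t)) (- sin (a2 * t)) 0)
                   (vec3 (sin (a2 * t)) (cos (a2 * t)) 0)
                   (vec3 0 0 1))
       (a2 * t)).
Proof.
move=> unit_axis.
have expm_rotz0 phi : expm (phi *: e4 R) = CV (rotz phi) 0.
  by rewrite -expm_rotz scale0r addr0.
split.
- move=> a2_neq1 a2_neqN1 d w t mu nu cb sb.
  have a13_ge0 : 0 <= a1 ^+ 2 + a3 ^+ 2 by rewrite addr_ge0 ?sqr_ge0.
  have w2 : w ^+ 2 = a1 ^+ 2 + a3 ^+ 2 + d ^+ 2.
    rewrite sqr_sqrtr; first by lra.
    by rewrite addr_ge0 ?sqr_ge0 //; lra.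
  have w_neq0 : w != 0.
    have a2sq_neq1 : a2 ^+ 2 != 1 by rewrite sqrf_eq1 negb_or a2_neq1 a2_neqN1.
    apply: contraNneq a2sq_neq1 => w0.
    have : a1 ^+ 2 + a3 ^+ 2 + d ^+ 2 = 0 by rewrite -w2 w0 expr0n.
    have := sqr_ge0 a1; have := sqr_ge0 a3; have := sqr_ge0 d; lra.
  rewrite /gamma1 gamma1_generator (expm_so3 _ _ w_neq0 w2) expm_rotz0 CV_mul addr0.
  by rewrite [t * b]mulrC [t * a2]mulrC rodrigues_mul_rotzN.
- move=> a2_unit t.
  have [a1_0 a3_0] : a1 = 0 /\ a3 = 0.
    have a2sq : a2 ^+ 2 = 1 by case: a2_unit => ->; rewrite ?sqrrN expr1n.
    have /eqP : a1 ^+ 2 + a3 ^+ 2 = 0 by lra.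
    by rewrite paddr_eq0 ?sqr_ge0 // !sqrf_eq0 => /andP[/eqP -> /eqP ->].
  rewrite /gamma1 gamma1_generator a1_0 a3_0 so3_axis3 scalerA expm_rotz expm_rotz0.
  rewrite CV_mul rotz_add addr0 (_ : t * (b - a2) + - (t * b) = - (a2 * t)); last by ring.
  by rewrite /rotz cosN sinN opprK [t * a2]mulrC.
Qed.
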